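(* Fix an instance $(d,\mathcal{C},k)$ of $k$-center with $|\mathcal{C}|=n$, an optimal solution $F^*=\{o_1,\dots,o_k\}$ with balls $O_t=\{c\in\mathcal{C}: d(o_t,c)\le \mathrm{OPT}\}$, and an execution $F_0\supseteq F_1\supseteq\dots\supseteq F_{n-k}$ of the reverse greedy algorithm. If there exists $t$ such that $|O_t\cap F_{n-k}|\ge 2$, then $\Gamma(F_{c_{l+1}}) < \Gamma(F_{c_l})$ for every integer $l\ge 0$ such that both $c_l$ and $c_{l+1}$ are defined.
   Context: An instance of $k$-center consists of a finite metric space $(d,\mathcal{C})$ with $|\mathcal{C}|=n$ and an integer $k\le n$; every point is both a client and a potential facility. For nonempty $F\subseteq\mathcal{C}$, $d(c,F):=\min_{f\in F}d(c,f)$ and $\mathrm{cost}(F):=\max_{c\in\mathcal{C}}d(c,F)$; $\mathrm{OPT}$ is the minimum cost over sets of at most $k$ points, attained by $F^*$. Reverse greedy: $F_0:=\mathcal{C}$, and for $i=1,\dots,n-k$, $F_i:=F_{i-1}\setminus\{f_i\}$ where $f_i\in\arg\min_{f\in F_{i-1}}\mathrm{cost}(F_{i-1}\setminus\{f\})$ (ties arbitrary). For an integer $l\ge0$, $F_i$ is called $l$-critical if $\mathrm{cost}(F_i)\le 2l\cdot\mathrm{OPT}$ and $\mathrm{cost}(F_{i+1})>2l\cdot\mathrm{OPT}$ (with $0\le i< n-k$); $c_l$ denotes the index $i$ such that $F_i$ is $l$-critical, and $c_l$ is said to be defined if such an $i$ exists. A consolidation of $F\subseteq\mathcal{C}$ is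 a collection $\Phi=\{P_1,P_2,\dots\}$ of subsets $P_s\subseteq\mathcal{C}$ such that (1) $F\subseteq\bigcup_s P_s$; (2) $\max_{x,y\in P_s}d(x,y)\le 2\cdot\mathrm{OPT}$ for every $P_s$; (3) whenever $f,f'\in F\cap O_t$ for some $t$, there is some $P_s$ with $f,f'\in P_s$. The consolidation number $\Gamma(F)$ is the minimum cardinality of a consolidation of $F$. *)

From HB Require Import structures.
From mathcomp Require Import all_boot all_order all_algebra.
Set Implicit Arguments. Unset Strict Implicit. Unset Printing Implicit Defensive.
Import Order.TTheory GRing.Theory Num.Theory.
Local Open Scope ring_scope.

Section KCenter.
Variables (R : realFieldType) (T : finType) (d : T -> T -> R).

Definition is_metric : Prop :=
  [/\ forall x y, 0 <= d x y,
      forall x y, d x y = 0 <-> x = y,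
      forall x y, d x y = d y x &
      forall x y z, d x z <= d x y + d y z].

(* d(c,F) = min_{f in F} d(c,f); meaningful for nonempty F (the default
   value of the fold is itself d c f0 for some f0 in F). *)
Definition distF (c : T) (F : {set T}) : R :=
  \big[Num.min/d c (odflt c [pick f in F])]_(f in F) d c f.

(* cost(F) = max_{c} d(c,F)  (distances are >= 0, so 0 is a neutral default) *)
Definition cost (F : {set T}) : R := \big[Num.max/0]_(c : T) distF c F.

Definition optimal (k : nat) (Fstar : {set T}) : Prop :=
  [/\ Fstar != set0, (#|Fstar| <= k)%N &
      forall F : {set T}, F != set0 -> (#|F| <= k)%N -> cost Fstar <= cost F].

Definition reverse_greedy (k : nat) (F : nat -> {set T}) : Prop :=
  F 0 = setT /\
  forall i, (i < #|T| - k)%N ->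
    exists f, [/\ f \in F i, F i.+1 = F i :\ f &
      forall g, g \in F i -> cost (F i :\ f) <= cost (F i :\ g)].

Definition critical (k : nat) (OPT : R) (F : nat -> {set T}) (l i : nat) : bool :=
  [&& (i < #|T| - k)%N, cost (F i) <= (2 * l)%:R * OPT &
      (2 * l)%:R * OPT < cost (F i.+1)].

Definition ball (OPT : R) (o : T) : {set T} := [set c | d o c <= OPT].

Definition consolidation (Fstar : {set T}) (OPT : R) (F : {set T})
    (Phi : {set {set T}}) : bool :=
  [&& F \subset \bigcup_(P in Phi) P,
      [forall P in Phi, forall x in P, forall y in P, d x y <= 2%:R * OPT] &
      [forall o in Fstar, forall f in F :&: ball OPT o,
         forall f' in F :&: ball OPT o, [exists P in Phi, (f \in P) && (f' \in P)]]].

(* consolidation number: minimum cardinality of a consolidation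
   (a consolidation always exists, e.g. all pairs and singletons) *)
Definition Gamma (Fstar : {set T}) (OPT : R) (F : {set T}) : nat :=
  \big[minn/#|{set {set T}}|]_(Phi : {set {set T}} | consolidation Fstar OPT F Phi)
     #|Phi|.

End KCenter.

From HB Require Import structures.
From mathcomp Require Import all_boot all_order all_algebra.
From mathcomp Require Import lra.
Import Order.TTheory GRing.Theory Num.Theory.
Local Open Scope ring_scope.
Set Implicit Arguments. Unset Strict Implicit.

(* Take a minimum consolidation Phi of F_i and two points f <> f' of the
   final solution in a common optimal ball. Since cost only grows along the
   execution, i <= j, so f and f' lie in F_j, which is contained in F_i, and
   some block P0 of Phi contains both. The blocks of Phi meeting F_j \ {f}
   still consolidate F_j (P0 is kept thanks to f'). If a block is lost, Gamma
   drops. Otherwise every block meets F_j \ {f}; as blocks have diameter at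
   most 2 OPT, cost(F_j \ {f}) <= cost(F_i) + 2 OPT <= 2(l+1) OPT, so the
   greedy step from F_j stays below the threshold 2(l+1) OPT, contradicting
   the criticality of F_j. *)

Section Cost.
Variables (R : realFieldType) (T : finType) (d : T -> T -> R).

Lemma distF_le c (A : {set T}) x : x \in A -> distF d c A <= d c x.
Proof. by move=> xA; apply: bigmin_le_cond. Qed.

Lemma distF_attained c (A : {set T}) :
  A != set0 -> exists2 x, x \in A & distF d c A = d c x.
Proof.
case/set0Pn=> x0 x0A; have [x xA xmin] := arg_minP (d c) x0A.
exists x => //; apply/eqP; rewrite eq_le distF_le //=.
apply/bigmin_geP; split=> [|y /xmin //].
by case: pickP => [y /xmin|/(_ x0)]; rewrite ?x0A.
Qed.

Lemma distF_le_cost c (A : {set T}) : distF d c A <= cost d A.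
Proof. exact: (le_bigmax _ (fun c => distF d c A)). Qed.

Lemma cost_ge0 (A : {set T}) : 0 <= cost d A.
Proof. exact: bigmax_ge_id. Qed.

Lemma cost_le (A : {set T}) r :
  0 <= r -> (forall c, distF d c A <= r) -> cost d A <= r.
Proof. by move=> r0 Ar; apply: bigmax_le. Qed.

Lemma cost_superset_le (A B : {set T}) :
  A != set0 -> A \subset B -> cost d B <= cost d A.
Proof.
move=> A0 AB; apply: cost_le (cost_ge0 A) _ => c.
have [x xA xE] := distF_attained c A0.
by apply: le_trans (distF_le c (subsetP AB x xA)) _; rewrite -xE distF_le_cost.
Qed.

End Cost.

Section Consolidation.
Variables (R : realFieldType) (T : finType) (d : T -> T -> R).
Variables (Fstar : {set T}) (OPT : R).
Hypothesis d_metric : is_metric d.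
Hypothesis OPT_ge0 : 0 <= OPT.

Lemma ball_pair_le o x y :
  x \in ball d OPT o -> y \in ball d OPT o -> d x y <= 2%:R * OPT.
Proof.
case: d_metric => _ _ dC dtri; rewrite !inE => xo yo.
by have := dtri x o y; rewrite (dC x o); lra.
Qed.

Lemma consolidation_exists (A : {set T}) :
  exists Phi, consolidation d Fstar OPT A Phi.
Proof.
have dxx x : d x x = 0 by case: d_metric => _ d0 _ _; apply/d0.
pose small := [set P : {set T} | [forall x in P, forall y in P, d x y <= 2%:R * OPT]].
exists small; apply/and3P; split.
- apply/subsetP => x _; apply/bigcupP; exists [set x]; rewrite ?set11 //.
  rewrite inE; apply/forall_inP => y /set1P ->; apply/forall_inP => z /set1P ->.
  by rewrite dxx mulr_ge0 ?ler0n.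
- by apply/forall_inP => P; rewrite inE.
- apply/forall_inP => o _; apply/forall_inP => x /setIP[_ xo].
  apply/forall_inP => y /setIP[_ yo]; apply/exists_inP.
  exists [set x; y]; rewrite ?set21 ?set22 //.
  rewrite inE; apply/forall_inP => u /set2P[]->; apply/forall_inP => v /set2P[]->;
  by apply: (@ball_pair_le o).
Qed.

Lemma Gamma_le_card (A : {set T}) Phi :
  consolidation d Fstar OPT A Phi -> (Gamma d Fstar OPT A <= #|Phi|)%N.
Proof.
move=> PhiA; rewrite /Gamma -minEnat -leEnat.
exact: (bigmin_le_cond _ (fun Phi : {set {set T}} => #|Phi|) PhiA).
Qed.

Lemma Gamma_attained (A : {set T}) :
  exists2 Phi, consolidation d Fstar OPT A Phi & #|Phi| = Gamma d Fstar OPT A.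
Proof.
have [Phi0 Phi0A] := consolidation_exists A.
have [Phi PhiA Phimin] := arg_minnP (fun Phi : {set {set T}} => #|Phi|) Phi0A.
exists Phi => //; apply/eqP; rewrite eqn_leq Gamma_le_card // andbT.
rewrite /Gamma -minEnat -leEnat; apply/bigmin_geP; split=> [|Psi /Phimin //].
exact: leq_trans (max_card _) (leq_card _ (@set1_inj _)).
Qed.

Lemma consolidation_restrict (A B : {set T}) Phi o f f' :
  consolidation d Fstar OPT A Phi -> B \subset A -> o \in Fstar ->
  f \in B :&: ball d OPT o -> f' \in B :&: ball d OPT o -> f != f' ->
  consolidation d Fstar OPT B [set P in Phi | P :&: (B :\ f) != set0].
Proof.
move=> /and3P[cov diam pairs] BA oF fBo f'Bo ff'.
set Phi' := [set P in Phi | _].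
have inPhi' P x : P \in Phi -> x \in P -> x \in B -> x != f -> P \in Phi'.
  move=> PPhi xP xB xf; rewrite inE PPhi; apply/set0Pn.
  by exists x; rewrite !inE xP xf xB.
have common o' x y : o' \in Fstar ->
    x \in B :&: ball d OPT o' -> y \in B :&: ball d OPT o' ->
  exists2 P, P \in Phi & (x \in P) && (y \in P).
  have inA z : z \in B :&: ball d OPT o' -> z \in A :&: ball d OPT o'.
    by rewrite !inE => /andP[/(subsetP BA) -> ->].
  move=> o'F /inA xA /inA yA; apply/exists_inP.
  by move/forall_inP/(_ o' o'F)/forall_inP/(_ x xA)/forall_inP/(_ y yA): pairs.
have [P0 P0Phi /andP[fP0 f'P0]] := common o f f' oF fBo f'Bo.
have P0Phi' : P0 \in Phi'.
  by case/setIP: f'Bo => f'B _; apply: (inPhi' _ f') => //; rewrite eq_sym.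
apply/and3P; split.
- apply/subsetP => x xB; apply/bigcupP.
  have [-> | xf] := eqVneq x f; first by exists P0.
  have /bigcupP[P PPhi xP] := subsetP cov x (subsetP BA x xB).
  by exists P => //; apply: (inPhi' P x).
- apply/forall_inP => P; rewrite inE => /andP[PPhi _].
  exact: (forall_inP diam P PPhi).
- apply/forall_inP => o' o'F; apply/forall_inP => x xBo.
  apply/forall_inP => y yBo; apply/exists_inP.
  have [P PPhi /andP[xP yP]] := common o' x y o'F xBo yBo.
  have [PPhi' | PnPhi'] := boolP (P \in Phi'); first by exists P; rewrite ?xP.
  have eq_f z : z \in P -> z \in B :&: ball d OPT o' -> z = f.
    move=> zP /setIP[zB _]; apply/eqP; apply: contraNT PnPhi'.
    exact: inPhi' zP zB.
  by rewrite (eq_f x xP xBo) (eq_f y yP yBo); exists P0; rewrite ?fP0.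
Qed.

Lemma cost_hitting_set_le (A C : {set T}) Phi :
  consolidation d Fstar OPT A Phi -> A != set0 ->
  (forall P, P \in Phi -> P :&: C != set0) ->
  cost d C <= cost d A + 2%:R * OPT.
Proof.
case/and3P=> cov diam _ A0 meet; have [_ _ _ dtri] := d_metric.
apply: cost_le => [|c]; first by rewrite addr_ge0 ?cost_ge0 ?mulr_ge0 ?ler0n.
have [x xA xE] := distF_attained d c A0.
have /bigcupP[P PPhi xP] := subsetP cov x xA.
have /set0Pn[y /setIP[yP yC]] := meet P PPhi.
have dxy : d x y <= 2%:R * OPT.
  by move/forall_inP/(_ P PPhi)/forall_inP/(_ x xP)/forall_inP/(_ y yP): diam.
apply: le_trans (distF_le d c yC) (le_trans (dtri c x y) _).
by rewrite lerD // -xE distF_le_cost.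
Qed.

Lemma Gamma_ltn_or_cost_le (A B : {set T}) o f f' :
  B \subset A -> o \in Fstar ->
  f \in B :&: ball d OPT o -> f' \in B :&: ball d OPT o -> f != f' ->
  (Gamma d Fstar OPT B < Gamma d Fstar OPT A)%N \/
  cost d (B :\ f) <= cost d A + 2%:R * OPT.
Proof.
move=> BA oF fBo f'Bo ff'.
have [Phi PhiA <-] := Gamma_attained A.
have PhiB := consolidation_restrict PhiA BA oF fBo f'Bo ff'.
set Phi' := [set P in Phi | _] in PhiB.
have [Phi'E | Phi'Phi] := eqVneq Phi' Phi.
  right; apply: cost_hitting_set_le PhiA _ _.
    by case/setIP: fBo => /(subsetP BA) fA _; apply/set0Pn; exists f.
  by move=> P; rewrite -Phi'E inE => /andP[].
left; apply: leq_ltn_trans (Gamma_le_card PhiB) (proper_card _).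
by rewrite properEneq Phi'Phi; apply/subsetP => P; rewrite inE => /andP[].
Qed.

End Consolidation.

Section ReverseGreedy.
Variables (R : realFieldType) (T : finType) (d : T -> T -> R).
Variables (k : nat) (F : nat -> {set T}).
Hypothesis greedy : reverse_greedy d k F.

Lemma reverse_greedy_subset i j : (i <= j <= #|T| - k)%N -> F j \subset F i.
Proof.
case/andP; elim: j => [|j IH]; first by rewrite leqn0 => /eqP->.
rewrite leq_eqVlt => /predU1P[-> _ | ij jN]; first exact: subxx.
have [g [_ -> _]] := greedy.2 j jN.
exact: subset_trans (subsetDl _ _) (IH ij (ltnW jN)).
Qed.

Lemma reverse_greedy_cost_step j f :
  (j < #|T| - k)%N -> f \in F j -> cost d (F j.+1) <= cost d (F j :\ f).
Proof. by move=> jN fj; have [g [_ -> gmin]] := greedy.2 j jN; apply: gmin. Qed.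

Lemma critical_succ_leq (OPT : R) l i j :
  0 <= OPT -> F (#|T| - k) != set0 ->
  critical d k OPT F l i -> critical d k OPT F l.+1 j -> (i <= j)%N.
Proof.
move=> OPT0 Fend0 /and3P[iN ci _] /and3P[jN _ cj].
rewrite leqNgt; apply/negP => ji.
have Fi0 : F i != set0.
  by apply: subset_neq0 _ Fend0; apply: reverse_greedy_subset; rewrite (ltnW iN) leqnn.
have FiFj : F i \subset F j.+1 by apply: reverse_greedy_subset; rewrite ji (ltnW iN).
have := cost_superset_le d Fi0 FiFj.
by rewrite mulnS natrD mulrDl in cj; lra.
Qed.

End ReverseGreedy.

Theorem lemma1 (R : realFieldType) (T : finType) (d : T -> T -> R)
    (k : nat) (Fstar : {set T}) (F : nat -> {set T}) :
  is_metric d ->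
  (k <= #|T|)%N ->
  optimal d k Fstar ->
  reverse_greedy d k F ->
  (exists2 o, o \in Fstar & (2 <= #|ball d (cost d Fstar) o :&: F (#|T| - k)%N|)%N) ->
  forall l i j : nat,
    critical d k (cost d Fstar) F l i ->
    critical d k (cost d Fstar) F l.+1 j ->
    (Gamma d Fstar (cost d Fstar) (F j) < Gamma d Fstar (cost d Fstar) (F i))%N.
Proof.
move=> dm _ _ greedy; set OPT := cost d Fstar => -[o oF card2] l i j crit_i crit_j.
have OPT0 : 0 <= OPT := cost_ge0 d Fstar.
have [f [f' [fo f'o ff']]] := card_gt1P card2.
have jN : (j < #|T| - k)%N by case/and3P: crit_j.
have Fend0 : F (#|T| - k)%N != set0 by apply/set0Pn; exists f; case/setIP: fo.
have ij := critical_succ_leq greedy OPT0 Fend0 crit_i crit_j.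
have FjFi : F j \subset F i by apply: (reverse_greedy_subset greedy); rewrite ij (ltnW jN).
have inFj x : x \in ball d OPT o :&: F (#|T| - k)%N -> x \in F j :&: ball d OPT o.
  case/setIP=> xo xN; rewrite inE xo andbT.
  by apply: subsetP xN; apply: (reverse_greedy_subset greedy); rewrite (ltnW jN) leqnn.
have [// | costE] := Gamma_ltn_or_cost_le dm OPT0 FjFi oF (inFj f fo) (inFj f' f'o) ff'.
have /setIP[fj _] := inFj f fo.
have := reverse_greedy_cost_step greedy jN fj.
case/and3P: crit_i => _ ci _; case/and3P: crit_j => _ _ cj.
by rewrite mulnS natrD mulrDl in cj; lra.
Qed.
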